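(* Let $d$ be a positive integer, $b\geqslant5$ an integer, $a>0$ real with $\zeta=\log_b a\notin\mathbb{Q}$. Define $f:\mathbb{T}^d\to\mathbb{T}^d$ by $f(x)_i=\{\zeta+\sum_{j=1}^{i}\binom{i}{j}x_j\}$, $i=1,\dots,d$, and for $t\in\{1,\dots,b-1\}$ let $U_t=\{x\in\mathbb{T}^d:\log_b t\leqslant x_d<\log_b(t+1)\}$. For $x,y\in\mathbb{T}^d$ write $x\sim_k y$ if for every $i\in\{0,\dots,k-1\}$ there is $t$ such that $f^i(x)$ and $f^i(y)$ both lie in the closure of $U_t$, and $x\sim y$ if $x\sim_k y$ for all $k\in\mathbb{N}_{>0}$. Let $M$ be the $d\times d$ matrix with $M_{ij}=\binom{i}{j}$ for $j\leqslant i$ and $0$ otherwise, and call $r\in\mathbb{R}^d$ stable if the last coordinate of $M^k r$ is an integer for every $k\in\mathbb{N}_{>0}$. If $x,y\in\mathbb{T}^d$ are such that $y-x$ is not stable, then $x\not\sim y$.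
   Context: $\mathbb{T}^d=\mathbb{R}^d/\mathbb{Z}^d$ identified with $[0,1)^d$; $\{y\}$ is the fractional part. Since $M$ is an integer matrix, every vector in $\mathbb{Z}^d$ is stable and stability of $y-x$ is well defined for $x,y\in\mathbb{T}^d$ (taking any lift to $\mathbb{R}^d$). *)

(* concrete reals R. Vectors in R^d are functions nat -> R,
   using coordinates 1..d (values at other indices are irrelevant). *)
From Stdlib Require Import Reals ZArith.
Open Scope R_scope.

Fixpoint sum1 (n : nat) (g : nat -> R) : R :=
  match n with
  | O => 0
  | S m => sum1 m g + g (S m)
  end.

Definition binom (i j : nat) : R := Binomial.C i j.

Definition logb (b : nat) (x : R) : R := ln x / ln (INR b).

Definition frac (y : R) : R := frac_part y.

Definition in_torus (d : nat) (x : nat -> R) : Prop :=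
  forall i, (1 <= i <= d)%nat -> 0 <= x i < 1.

Definition fmap (zeta : R) (x : nat -> R) : nat -> R :=
  fun i => frac (zeta + sum1 i (fun j => binom i j * x j)).

Definition U (d b t : nat) (u : nat -> R) : Prop :=
  in_torus d u /\ logb b (INR t) <= u d < logb b (INR t + 1).

(* closure in the torus T^d = R^d / Z^d (topology of the quotient,
   coordinatewise distance to the nearest integer translate) *)
Definition torus_closure (d : nat) (A : (nat -> R) -> Prop) (x : nat -> R) : Prop :=
  forall eps, 0 < eps -> exists u, A u /\
    forall i, (1 <= i <= d)%nat -> exists k : Z, Rabs (x i - u i - IZR k) < eps.

Definition sim_k (d b : nat) (zeta : R) (k : nat) (x y : nat -> R) : Prop :=
  forall i, (i < k)%nat -> exists t, (1 <= t <= b - 1)%nat /\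
    torus_closure d (U d b t) (Nat.iter i (fmap zeta) x) /\
    torus_closure d (U d b t) (Nat.iter i (fmap zeta) y).

Definition sim (d b : nat) (zeta : R) (x y : nat -> R) : Prop :=
  forall k, (0 < k)%nat -> sim_k d b zeta k x y.

Definition Mmul (r : nat -> R) : nat -> R :=
  fun i => sum1 i (fun j => binom i j * r j).

Definition stable (d : nat) (r : nat -> R) : Prop :=
  forall k, (0 < k)%nat -> exists z : Z, Nat.iter k Mmul r d = IZR z.

Definition is_rational (x : R) : Prop :=
  exists p q : Z, q <> 0%Z /\ x = IZR p / IZR q.

(* Modulo one, the last coordinates of the orbits of x and y under f are G(n)
   and G(n) + P(n), where G is a polynomial in n with leading term zeta n^d and
   P(n) = (M^n (y - x))_d is a polynomial of degree < d; instability says that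
   some P(k) is not an integer.  Either P is periodic modulo one, and then along
   an arithmetic progression P is constant modulo one, equal to some delta <> 0,
   while G is equidistributed by Weyl's theorem; or along a progression P is
   congruent modulo one to a polynomial with an irrational leading coefficient
   and of lower degree than G, so that (G, P) is equidistributed in the 2-torus.
   Either way, at some time one orbit has last coordinate in (0, log_b 2) and
   the other in (log_b 2, 1).  Since b >= 5, the closure of U_1 meets (0, 1) only
   below log_b 2 and the closures of the other U_t only above it, so the orbits
   are separated.  Weyl's theorem is proved by van der Corput differencing, and
   equidistribution is exploited through the bump functions cos (PI u)^(2K). *)

From Stdlib Require Import Reals ZArith Lra Lia Psatz Classical List FunctionalExtensionality.
Import ListNotations.
Open Scope R_scope.

Fixpoint rsum (N : nat) (g : nat -> R) : R :=
  match N with O => 0 | S M => rsum M g + g M end.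

Lemma rsum_ext N f g : (forall n, (n < N)%nat -> f n = g n) -> rsum N f = rsum N g.
Proof.
  induction N; simpl; intros H; auto.
  rewrite IHN, H by (auto; lia). reflexivity.
Qed.

Lemma rsum_add N f g : rsum N (fun n => f n + g n) = rsum N f + rsum N g.
Proof. induction N; simpl; [lra|]. rewrite IHN; lra. Qed.

Lemma rsum_sub N f g : rsum N (fun n => f n - g n) = rsum N f - rsum N g.
Proof. induction N; simpl; [lra|]. rewrite IHN; lra. Qed.

Lemma rsum_scal N a f : rsum N (fun n => a * f n) = a * rsum N f.
Proof. induction N; simpl; [lra|]. rewrite IHN; lra. Qed.

Lemma rsum_const N a : rsum N (fun _ => a) = INR N * a.
Proof. induction N; simpl rsum; [simpl; lra|]. rewrite IHN, S_INR; lra. Qed.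

Lemma rsum_le N f g : (forall n, (n < N)%nat -> f n <= g n) -> rsum N f <= rsum N g.
Proof.
  induction N; simpl; intros H; [lra|].
  assert (f N <= g N) by (apply H; lia).
  assert (rsum N f <= rsum N g) by (apply IHN; intros; apply H; lia).
  lra.
Qed.

Lemma rsum_nonneg N f : (forall n, (n < N)%nat -> 0 <= f n) -> 0 <= rsum N f.
Proof. intros H. rewrite <- (Rmult_0_r (INR N)), <- rsum_const. apply rsum_le. auto. Qed.

Lemma rsum_ge_first N g : (1 <= N)%nat -> (forall n, 0 <= g n) -> g O <= rsum N g.
Proof.
  intros HN Hg. induction N as [|[|N] IH]; [lia|simpl; lra|].
  simpl in *. pose proof (Hg (S N)). assert (g O <= rsum N g + g N) by (apply IH; lia). lra.
Qed.

Lemma rsum_abs_le N f B :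
  (forall n, (n < N)%nat -> Rabs (f n) <= B) -> Rabs (rsum N f) <= INR N * B.
Proof.
  induction N; simpl rsum; intros H; [rewrite Rabs_R0; simpl; lra|].
  rewrite S_INR. eapply Rle_trans; [apply Rabs_triang|].
  assert (Rabs (f N) <= B) by (apply H; lia).
  assert (Rabs (rsum N f) <= INR N * B) by (apply IHN; intros; apply H; lia).
  lra.
Qed.

Lemma rsum_swap N M (f : nat -> nat -> R) :
  rsum N (fun n => rsum M (fun m => f n m)) = rsum M (fun m => rsum N (fun n => f n m)).
Proof.
  induction N; simpl.
  - induction M; simpl; auto. rewrite <- IHM; lra.
  - rewrite IHN, <- rsum_add. reflexivity.
Qed.

Lemma rsum_telescope N F : rsum N (fun n => F (S n) - F n) = F N - F O.
Proof. induction N; simpl; [lra|]. rewrite IHN; lra. Qed.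

Lemma rsum_mul N M f g :
  rsum N f * rsum M g = rsum N (fun n => rsum M (fun m => f n * g m)).
Proof. induction N; simpl; [lra|]. rewrite <- IHN, rsum_scal. lra. Qed.

Lemma rsum_indicator H h a :
  (h < H)%nat -> rsum H (fun h' => if Nat.eqb h h' then a else 0) = a.
Proof.
  induction H as [|H IH]; intros Hh; [lia|]. simpl.
  destruct (Nat.eqb_spec h H) as [->|Hne].
  - rewrite (rsum_ext H _ (fun _ => 0)), rsum_const; [ring|].
    intros n Hn. destruct (Nat.eqb_spec H n); [lia|auto].
  - rewrite IH by lia. ring.
Qed.

Lemma rsum_shift_bound N s f B : (forall n, Rabs (f n) <= B) ->
  Rabs (rsum N (fun n => f (n + s)%nat) - rsum N f) <= 2 * INR s * B.
Proof.
  intros HB. induction s.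
  - rewrite (rsum_ext N _ f) by (intros; f_equal; lia).
    rewrite Rminus_diag, Rabs_R0. simpl. lra.
  - assert (E : rsum N (fun n => f (n + S s)%nat) - rsum N (fun n => f (n + s)%nat)
                = f (N + s)%nat - f s).
    { rewrite <- rsum_sub.
      pose proof (rsum_telescope N (fun k => f (k + s)%nat)) as T. simpl in T. rewrite <- T.
      apply rsum_ext. intros. simpl. repeat f_equal. lia. }
    pose proof (HB (N + s)%nat). pose proof (HB s).
    rewrite S_INR. revert IHs E H H0.
    generalize (rsum N (fun n => f (n + S s)%nat)) (rsum N (fun n => f (n + s)%nat))
      (rsum N f) (f (N + s)%nat) (f s).
    intros. unfold Rabs in *. repeat destruct Rcase_abs; lra.
Qed.

Lemma rsum_sq_le N f : (rsum N f) ^ 2 <= INR N * rsum N (fun n => (f n) ^ 2).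
Proof.
  destruct N as [|N]; [simpl; lra|].
  assert (HN : 0 < INR (S N)) by (apply lt_0_INR; lia).
  set (t := rsum (S N) f / INR (S N)).
  assert (H : 0 <= rsum (S N) (fun n => (f n - t) ^ 2))
    by (apply rsum_nonneg; intros; apply pow2_ge_0).
  rewrite (rsum_ext (S N) _ (fun n => (f n) ^ 2 + (-2 * t) * f n + t ^ 2)) in H
    by (intros; ring).
  rewrite !rsum_add, rsum_scal, rsum_const in H.
  assert (E : rsum (S N) f = t * INR (S N)) by (unfold t; field; lra).
  rewrite E in *. clearbody t.
  generalize dependent (rsum (S N) (fun n => f n ^ 2)). intros Q H.
  assert (0 <= INR (S N) * (Q - INR (S N) * t ^ 2)) by (apply Rmult_le_pos; lra).
  nra.
Qed.

(** * Polynomial sequences *)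

(* [poly_seq D f]: [f] agrees on [nat] with a real polynomial of degree at
   most [D], expressed by the vanishing of its [(D+1)]-st forward difference. *)
Fixpoint poly_seq (D : nat) (f : nat -> R) : Prop :=
  match D with
  | O => forall n, f n = f O
  | S D' => poly_seq D' (fun n => f (S n) - f n)
  end.

Lemma poly_seq_ext D f g : (forall n, f n = g n) -> poly_seq D f -> poly_seq D g.
Proof.
  revert f g; induction D; simpl; intros f g E H.
  - intros n. rewrite <- !E. auto.
  - apply (IHD (fun n => f (S n) - f n)); auto. intros. rewrite !E. auto.
Qed.

Lemma poly_seq_const D a : poly_seq D (fun _ => a).
Proof. revert a; induction D; simpl; auto. Qed.

Lemma poly_seq_add D f g : poly_seq D f -> poly_seq D g -> poly_seq D (fun n => f n + g n).
Proof.
  revert f g; induction D; simpl; intros f g Hf Hg.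
  - intros n. rewrite Hf, Hg. auto.
  - apply (poly_seq_ext D (fun n => (f (S n) - f n) + (g (S n) - g n))); [intros; ring|auto].
Qed.

Lemma poly_seq_scal D a f : poly_seq D f -> poly_seq D (fun n => a * f n).
Proof.
  revert f; induction D; simpl; intros f Hf.
  - intros n. rewrite Hf. auto.
  - apply (poly_seq_ext D (fun n => a * (f (S n) - f n))); [intros; ring|auto].
Qed.

Lemma poly_seq_sub D f g : poly_seq D f -> poly_seq D g -> poly_seq D (fun n => f n - g n).
Proof.
  intros Hf Hg. apply (poly_seq_ext D (fun n => f n + (-1) * g n)); [intros; ring|].
  apply poly_seq_add, poly_seq_scal; auto.
Qed.

Lemma poly_seq_succ D f : poly_seq D f -> poly_seq (S D) f.
Proof.
  revert f; induction D; intros f Hf.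
  - simpl in *. intros n. rewrite (Hf (S n)), (Hf n), (Hf 1%nat). auto.
  - exact (IHD _ Hf).
Qed.

Lemma poly_seq_le D D' f : (D <= D')%nat -> poly_seq D f -> poly_seq D' f.
Proof. induction 1; auto. intros. apply poly_seq_succ; auto. Qed.

Lemma poly_seq_shift D s f : poly_seq D f -> poly_seq D (fun n => f (n + s)%nat).
Proof.
  revert f; induction D; simpl; intros f Hf.
  - intros n. rewrite Hf, (Hf s). auto.
  - exact (IHD (fun k => f (S k) - f k) Hf).
Qed.

Lemma poly_seq_sum1 D k (g : nat -> nat -> R) :
  (forall j, (1 <= j <= k)%nat -> poly_seq D (g j)) ->
  poly_seq D (fun n => sum1 k (fun j => g j n)).
Proof.
  induction k; simpl; intros H.
  - apply poly_seq_const.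
  - apply poly_seq_add; [apply IHk; intros|]; apply H; lia.
Qed.

Lemma poly_seq_diff D h f :
  poly_seq (S D) f -> poly_seq D (fun n => f (n + h)%nat - f n).
Proof.
  intros Hf. simpl in Hf.
  apply (poly_seq_ext D (fun n => rsum h (fun t => f (S (n + t)) - f (n + t)%nat))).
  - intros n. pose proof (rsum_telescope h (fun t => f (n + t)%nat)) as T.
    rewrite (rsum_ext h _ (fun t => f (n + S t)%nat - f (n + t)%nat))
      by (intros; repeat f_equal; lia).
    rewrite T. repeat f_equal; lia.
  - induction h; simpl; [apply poly_seq_const|].
    apply poly_seq_add; auto. exact (poly_seq_shift D h _ Hf).
Qed.

Lemma poly_seq_affine D f s q : poly_seq D f -> poly_seq D (fun m => f (s + q * m)%nat).
Proof.
  revert f; induction D; simpl; intros f Hf.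
  - intros m. rewrite Hf, (Hf (s + q * 0)%nat). auto.
  - apply (poly_seq_ext D (fun m => (fun n => f (n + q)%nat - f n) (s + q * m)%nat)).
    + intros m. simpl. replace (s + q * S m)%nat with (s + q * m + q)%nat by lia. auto.
    + exact (IHD (fun n => f (n + q)%nat - f n) (poly_seq_diff D q f Hf)).
Qed.

Lemma poly_seq_mul_id D f : poly_seq D f -> poly_seq (S D) (fun n => INR n * f n).
Proof.
  revert f; induction D; intros f Hf.
  - change (forall n, INR (S n) * f (S n) - INR n * f n = INR 1 * f 1%nat - INR 0 * f 0%nat).
    simpl in Hf. intros n. rewrite (Hf (S n)), (Hf n), (Hf 1%nat), S_INR. simpl. ring.
  - change (poly_seq (S D) (fun n => INR (S n) * f (S n) - INR n * f n)).
    apply (poly_seq_ext (S D) (fun n => INR n * (f (S n) - f n) + f (n + 1)%nat)).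
    + intros n. rewrite S_INR, Nat.add_1_r. ring.
    + apply poly_seq_add; [apply IHD, Hf|apply poly_seq_shift, Hf].
Qed.

Lemma poly_seq_pow D : poly_seq D (fun n => INR n ^ D).
Proof.
  induction D; [simpl; auto|].
  apply (poly_seq_ext _ (fun n => INR n * INR n ^ D)); [auto|].
  apply poly_seq_mul_id; auto.
Qed.

Lemma poly_seq_binomial_tail D h :
  poly_seq D (fun n => (INR n + INR h) ^ S (S D) - INR n ^ S (S D)
                       - INR (S (S D)) * INR h * INR n ^ S D).
Proof.
  induction D.
  - apply (poly_seq_ext 0 (fun _ => INR h ^ 2)); [intros; rewrite !S_INR; simpl; ring|].
    apply poly_seq_const.
  - apply (poly_seq_ext (S D) (fun n =>
        INR n * ((INR n + INR h) ^ S (S D) - INR n ^ S (S D)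
                 - INR (S (S D)) * INR h * INR n ^ S D)
        + INR h * ((fun k => INR k ^ S (S D)) (n + h)%nat - INR n ^ S (S D)))).
    + intros n. rewrite plus_INR, (S_INR (S (S D))). simpl. ring.
    + apply poly_seq_add; [apply poly_seq_mul_id; auto|].
      apply poly_seq_scal. exact (poly_seq_diff (S D) h _ (poly_seq_pow (S (S D)))).
Qed.

Definition has_lead (D : nat) (c : R) (f : nat -> R) : Prop :=
  poly_seq (pred D) (fun n => f n - c * INR n ^ D).

Lemma has_lead_ext D c f g : (forall n, f n = g n) -> has_lead D c f -> has_lead D c g.
Proof. intros E. apply poly_seq_ext. intros. rewrite E. auto. Qed.

Lemma has_lead_poly_seq D c f : has_lead D c f -> poly_seq D f.
Proof.
  intros H. apply (poly_seq_ext D (fun n => (f n - c * INR n ^ D) + c * INR n ^ D));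
    [intros; ring|].
  apply poly_seq_add; [apply (poly_seq_le (pred D)); [lia|auto]|].
  apply poly_seq_scal, poly_seq_pow.
Qed.

Lemma has_lead_0_poly_seq D f : has_lead D 0 f -> poly_seq (pred D) f.
Proof. apply poly_seq_ext. intros. ring. Qed.

Lemma has_lead_add D c f g :
  has_lead D c f -> poly_seq (pred D) g -> has_lead D c (fun n => f n + g n).
Proof.
  intros Hf Hg. apply (poly_seq_ext _ (fun n => (f n - c * INR n ^ D) + g n)); [intros; ring|].
  apply poly_seq_add; auto.
Qed.

Lemma has_lead_scal D a c f : has_lead D c f -> has_lead D (a * c) (fun n => a * f n).
Proof.
  intros H. apply (poly_seq_ext _ (fun n => a * (f n - c * INR n ^ D))); [intros; ring|].
  apply poly_seq_scal; auto.
Qed.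

Lemma has_lead_diff D c f h : has_lead (S (S D)) c f ->
  has_lead (S D) (c * INR (S (S D)) * INR h) (fun n => f (n + h)%nat - f n).
Proof.
  unfold has_lead; simpl pred; intros H.
  apply (poly_seq_ext D (fun n =>
      ((fun k => f k - c * INR k ^ S (S D)) (n + h)%nat - (f n - c * INR n ^ S (S D)))
      + c * ((INR n + INR h) ^ S (S D) - INR n ^ S (S D)
             - INR (S (S D)) * INR h * INR n ^ S D))).
  - intros n. rewrite plus_INR. simpl. ring.
  - apply poly_seq_add; [exact (poly_seq_diff D h _ H)|].
    apply poly_seq_scal, poly_seq_binomial_tail.
Qed.

Lemma has_lead_antidiff D c f :
  has_lead (S D) (c * INR (S (S D))) (fun n => f (S n) - f n) -> has_lead (S (S D)) c f.
Proof.
  unfold has_lead; simpl pred; intros H.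
  change (poly_seq D (fun n => (f (S n) - c * INR (S n) ^ S (S D))
                               - (f n - c * INR n ^ S (S D)))).
  apply (poly_seq_ext D (fun n => (f (S n) - f n - c * INR (S (S D)) * INR n ^ S D)
      - c * ((INR n + INR 1) ^ S (S D) - INR n ^ S (S D)
             - INR (S (S D)) * INR 1 * INR n ^ S D))).
  - intros n. rewrite (S_INR n). simpl (INR 1). ring.
  - apply poly_seq_sub; [auto|apply poly_seq_scal, poly_seq_binomial_tail].
Qed.

Lemma has_lead_affine D c f s q :
  has_lead D c f -> has_lead D (c * INR q ^ D) (fun m => f (s + q * m)%nat).
Proof.
  unfold has_lead; intros H. destruct D as [|D].
  - simpl in *. intros m. pose proof (H (s + q * m)%nat). pose proof (H (s + q * 0)%nat). lra.
  - simpl pred in *.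
    apply (poly_seq_ext D (fun m => (fun n => f n - c * INR n ^ S D) (s + q * m)%nat
        + c * ((fun n => INR (n + s) ^ S D - INR n ^ S D) (0 + q * m)%nat))).
    + intros m. simpl. rewrite (Nat.add_comm (q * m) s), mult_INR, Rpow_mult_distr. ring.
    + apply poly_seq_add; [exact (poly_seq_affine D _ s q H)|apply poly_seq_scal].
      exact (poly_seq_affine D _ 0 q (poly_seq_diff D s _ (poly_seq_pow (S D)))).
Qed.

Lemma poly_seq_has_lead D f : poly_seq (S D) f -> exists c, has_lead (S D) c f.
Proof.
  revert f; induction D; intros f Hf.
  - exists (f 1%nat - f 0%nat). simpl in Hf. intros n. induction n; [simpl; ring|].
    rewrite S_INR. specialize (Hf n). simpl in *. lra.
  - destruct (IHD _ Hf) as [c' Hc']. exists (c' / INR (S (S D))).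
    apply has_lead_antidiff.
    replace (c' / INR (S (S D)) * INR (S (S D))) with c' by (field; apply not_0_INR; lia).
    exact Hc'.
Qed.

Definition mean_to (g : nat -> R) (c : R) : Prop :=
  forall eps, 0 < eps -> exists N0, forall N, (N0 <= N)%nat ->
    Rabs (rsum N g - c * INR N) <= eps * INR N.

Lemma mean_to_ext g g' c : (forall n, g n = g' n) -> mean_to g c -> mean_to g' c.
Proof.
  intros E H eps He. destruct (H eps He) as [N0 HN]. exists N0. intros N HN'.
  rewrite <- (rsum_ext N g g') by auto. auto.
Qed.

Lemma mean_to_const a : mean_to (fun _ => a) a.
Proof.
  intros eps He. exists O. intros N _. rewrite rsum_const.
  replace (INR N * a - a * INR N) with 0 by ring. rewrite Rabs_R0.
  pose proof (pos_INR N). nra.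
Qed.

Lemma mean_to_add g1 g2 c1 c2 :
  mean_to g1 c1 -> mean_to g2 c2 -> mean_to (fun n => g1 n + g2 n) (c1 + c2).
Proof.
  intros H1 H2 eps He.
  destruct (H1 (eps / 2)) as [N1 HN1]; [lra|]. destruct (H2 (eps / 2)) as [N2 HN2]; [lra|].
  exists (N1 + N2)%nat. intros N HN. rewrite rsum_add.
  specialize (HN1 N ltac:(lia)). specialize (HN2 N ltac:(lia)).
  replace (rsum N g1 + rsum N g2 - (c1 + c2) * INR N)
    with ((rsum N g1 - c1 * INR N) + (rsum N g2 - c2 * INR N)) by ring.
  eapply Rle_trans; [apply Rabs_triang|lra].
Qed.

Lemma mean_to_scal g c a : mean_to g c -> mean_to (fun n => a * g n) (a * c).
Proof.
  intros H eps He. pose proof (Rabs_pos a).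
  destruct (H (eps / (Rabs a + 1))) as [N0 HN]; [apply Rdiv_lt_0_compat; lra|].
  exists N0. intros N HN'. specialize (HN N HN'). rewrite rsum_scal.
  replace (a * rsum N g - a * c * INR N) with (a * (rsum N g - c * INR N)) by ring.
  rewrite Rabs_mult. pose proof (pos_INR N).
  apply Rmult_le_compat_l with (r := Rabs a) in HN; auto.
  eapply Rle_trans; [exact HN|].
  replace (Rabs a * (eps / (Rabs a + 1) * INR N))
    with (eps * INR N * (Rabs a / (Rabs a + 1))) by (field; lra).
  assert (Rabs a / (Rabs a + 1) <= 1)
    by (apply (Rmult_le_reg_r (Rabs a + 1)); [lra|]; field_simplify; lra).
  assert (0 <= eps * INR N) by nra. nra.
Qed.

Lemma mean_to_le g1 g2 c1 c2 :
  (forall n, g1 n <= g2 n) -> mean_to g1 c1 -> mean_to g2 c2 -> c1 <= c2.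
Proof.
  intros Hle H1 H2. apply Rnot_lt_le. intros Hlt.
  destruct (H1 ((c1 - c2) / 4)) as [N1 HN1]; [lra|].
  destruct (H2 ((c1 - c2) / 4)) as [N2 HN2]; [lra|].
  set (N := (N1 + N2 + 1)%nat).
  specialize (HN1 N ltac:(unfold N; lia)). specialize (HN2 N ltac:(unfold N; lia)).
  assert (rsum N g1 <= rsum N g2) by (apply rsum_le; auto).
  assert (0 < INR N) by (apply lt_0_INR; unfold N; lia).
  unfold Rabs in HN1, HN2. destruct (Rcase_abs (rsum N g1 - c1 * INR N)),
    (Rcase_abs (rsum N g2 - c2 * INR N)); nra.
Qed.

(** * Weyl's theorem for polynomial sequences *)

Definition irrational (x : R) : Prop := ~ is_rational x.

Lemma irrational_mul_IZR x z : irrational x -> z <> 0%Z -> irrational (IZR z * x).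
Proof.
  intros Hx Hz [p [q [Hq E]]]. apply Hx. exists p, (q * z)%Z. split; [lia|].
  apply not_0_IZR in Hz. apply not_0_IZR in Hq.
  rewrite mult_IZR. apply (Rmult_eq_reg_l (IZR z)); auto. rewrite E. field. auto.
Qed.

Lemma irrational_mul_INR x n : irrational x -> n <> O -> irrational (x * INR n).
Proof. intros. rewrite Rmult_comm, INR_IZR_INZ. apply irrational_mul_IZR; auto. lia. Qed.

Lemma irrational_mul_pow x q k : irrational x -> (1 <= q)%nat -> irrational (x * INR q ^ k).
Proof.
  intros Hx Hq. rewrite <- pow_INR. apply irrational_mul_INR; auto.
  apply Nat.pow_nonzero. lia.
Qed.

Lemma sin_PI_irrational c : irrational c -> sin (PI * c) <> 0.
Proof.
  intros Hc E. apply sin_eq_0_0 in E as [k Ek]. apply Hc. exists k, 1%Z.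
  split; [lia|]. pose proof PI_RGT_0.
  apply (Rmult_eq_reg_l PI); [|lra]. rewrite Ek. simpl. field.
Qed.

Lemma eventually_le_mul a e : 0 < e -> exists N0, forall N, (N0 <= N)%nat -> a <= e * INR N.
Proof.
  intros He. destruct (INR_archimed e a He) as [N0 HN0]. exists N0. intros N HN.
  assert (INR N0 <= INR N) by (apply le_INR; auto). nra.
Qed.

Lemma eventually_forall_lt (P : nat -> nat -> Prop) H :
  (forall k, (k < H)%nat -> exists N0, forall N, (N0 <= N)%nat -> P k N) ->
  exists N0, forall k N, (k < H)%nat -> (N0 <= N)%nat -> P k N.
Proof.
  induction H as [|H IH]; intros Hk; [exists O; intros; lia|].
  destruct IH as [N1 HN1]; [intros; apply Hk; lia|].
  destruct (Hk H) as [N2 HN2]; [lia|].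
  exists (N1 + N2)%nat. intros k N Hk' HN.
  destruct (Nat.eq_dec k H) as [->|]; [apply HN2|apply HN1]; lia.
Qed.

Lemma cos_arith_sum a phi N :
  2 * sin a * rsum N (fun n => cos (2 * a * INR n + phi))
  = sin (2 * a * INR N + phi - a) - sin (phi - a).
Proof.
  set (F := fun n : nat => sin (2 * a * INR n + phi - a)).
  replace (sin (phi - a)) with (F O) by (unfold F; simpl; f_equal; ring).
  change (sin (2 * a * INR N + phi - a)) with (F N).
  rewrite <- rsum_telescope, <- rsum_scal. apply rsum_ext. intros n _. unfold F.
  rewrite S_INR.
  replace (2 * a * (INR n + 1) + phi - a) with ((2 * a * INR n + phi) + a) by ring.
  replace (2 * a * INR n + phi - a) with ((2 * a * INR n + phi) - a) by ring.
  rewrite sin_plus, sin_minus. ring.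
Qed.

Lemma cos_arith_sum_bound a phi N : sin a <> 0 ->
  Rabs (rsum N (fun n => cos (2 * a * INR n + phi))) <= 1 / Rabs (sin a).
Proof.
  intros Ha. pose proof (cos_arith_sum a phi N) as E.
  pose proof (SIN_bound (2 * a * INR N + phi - a)). pose proof (SIN_bound (phi - a)).
  assert (Hs : 0 < Rabs (sin a)) by (apply Rabs_pos_lt; auto).
  assert (HE : Rabs (2 * sin a * rsum N (fun n => cos (2 * a * INR n + phi))) <= 2)
    by (rewrite E; unfold Rabs; destruct Rcase_abs; lra).
  rewrite !Rabs_mult, Rabs_right in HE by lra.
  apply (Rmult_le_reg_l (Rabs (sin a))); auto. field_simplify; lra.
Qed.

Lemma rsum_window_approx N H g : (forall n, Rabs (g n) <= 1) ->
  Rabs (INR H * rsum N g - rsum N (fun n => rsum H (fun h => g (n + h)%nat)))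
  <= 2 * INR H ^ 2.
Proof.
  intros Hg. rewrite rsum_swap, <- rsum_const, <- rsum_sub.
  eapply Rle_trans; [apply (rsum_abs_le H _ (2 * INR H))|simpl; lra].
  intros h Hh. rewrite Rabs_minus_sym.
  eapply Rle_trans; [apply (rsum_shift_bound N h g 1 Hg)|].
  assert (INR h <= INR H) by (apply le_INR; lia). lra.
Qed.

Lemma sum_cos_sq_add_sum_sin_sq (a : nat -> R) H :
  (rsum H (fun h => cos (a h))) ^ 2 + (rsum H (fun h => sin (a h))) ^ 2
  = rsum H (fun h => rsum H (fun h' => cos (a h - a h'))).
Proof.
  rewrite <- !Rsqr_pow2. unfold Rsqr. rewrite !rsum_mul, <- rsum_add.
  apply rsum_ext. intros h _. rewrite <- rsum_add.
  apply rsum_ext. intros h' _. rewrite cos_minus. ring.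
Qed.

Section VanDerCorput.

Variables (th : nat -> R) (H N : nat) (B : R).
Hypothesis B_nonneg : 0 <= B.
Hypothesis correlation_bound : forall k, (1 <= k < H)%nat ->
  Rabs (rsum N (fun n => cos (th (n + k)%nat - th n))) <= B.

Lemma shifted_correlation_bound u v : (u < H)%nat -> (v < u)%nat ->
  Rabs (rsum N (fun n => cos (th (n + u)%nat - th (n + v)%nat))) <= B + 2 * INR H.
Proof.
  intros Hu Hvu. set (g := fun m => cos (th (m + (u - v))%nat - th m)).
  rewrite (rsum_ext N _ (fun n => g (n + v)%nat))
    by (intros n _; unfold g; do 3 f_equal; lia).
  pose proof (rsum_shift_bound N v g 1 ltac:(intros; apply Rabs_le, COS_bound)) as Hs.
  pose proof (correlation_bound (u - v)%nat ltac:(lia)) as Hc. fold g in Hc.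
  assert (INR v <= INR H) by (apply le_INR; lia).
  revert Hs Hc. generalize (rsum N (fun n => g (n + v)%nat)) (rsum N g). intros a b Ha Hb.
  unfold Rabs in *. repeat destruct Rcase_abs; lra.
Qed.

Lemma window_energy_bound :
  rsum N (fun n => (rsum H (fun h => cos (th (n + h)%nat))) ^ 2)
  + rsum N (fun n => (rsum H (fun h => sin (th (n + h)%nat))) ^ 2)
  <= INR H * INR N + INR H ^ 2 * (B + 2 * INR H).
Proof.
  rewrite <- rsum_add.
  rewrite (rsum_ext N _ (fun n => rsum H (fun h => rsum H (fun h' =>
              cos (th (n + h)%nat - th (n + h')%nat)))))
    by (intros n _; apply (sum_cos_sq_add_sum_sin_sq (fun h => th (n + h)%nat))).
  rewrite rsum_swap, (rsum_ext H _ (fun h => rsum H (fun h' =>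
      rsum N (fun n => cos (th (n + h)%nat - th (n + h')%nat))))) by (intros; apply rsum_swap).
  eapply Rle_trans.
  - apply (rsum_le H _ (fun h => rsum H (fun h' =>
        (if Nat.eqb h h' then INR N else 0) + (B + 2 * INR H)))).
    intros h Hh. apply rsum_le. intros h' Hh'.
    destruct (Nat.eqb_spec h h') as [<-|Hne].
    + rewrite (rsum_ext N _ (fun _ => 1)) by (intros; rewrite Rminus_diag; apply cos_0).
      rewrite rsum_const. pose proof (pos_INR H). lra.
    + rewrite Rplus_0_l. eapply Rle_trans; [apply Rle_abs|].
      destruct (Nat.lt_total h' h) as [Hlt|[Heq|Hgt]]; [| lia |].
      * apply shifted_correlation_bound; auto.
      * rewrite (rsum_ext N _ (fun n => cos (th (n + h')%nat - th (n + h)%nat)))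
          by (intros; rewrite <- cos_neg; f_equal; ring).
        apply shifted_correlation_bound; auto.
  - rewrite (rsum_ext H _ (fun h => INR N + INR H * (B + 2 * INR H))).
    + rewrite rsum_const. lra.
    + intros h Hh. rewrite rsum_add, rsum_indicator, rsum_const; auto.
Qed.

(* van der Corput's inequality: average over windows of length [H], then Cauchy-Schwarz. *)
Lemma van_der_corput :
  INR H ^ 2 * (rsum N (fun n => cos (th n))) ^ 2
  <= 2 * INR N * (INR H * INR N + INR H ^ 2 * (B + 2 * INR H)) + 8 * INR H ^ 4.
Proof.
  set (S := rsum N (fun n => cos (th n))).
  set (X := rsum N (fun n => rsum H (fun h => cos (th (n + h)%nat)))).
  assert (Happrox : Rabs (INR H * S - X) <= 2 * INR H ^ 2)
    by (apply (rsum_window_approx N H (fun n => cos (th n))); intros; apply Rabs_le, COS_bound).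
  assert (HCS : X ^ 2 <= INR N * rsum N (fun n => (rsum H (fun h => cos (th (n + h)%nat))) ^ 2))
    by apply rsum_sq_le.
  assert (Hsin : 0 <= rsum N (fun n => (rsum H (fun h => sin (th (n + h)%nat))) ^ 2))
    by (apply rsum_nonneg; intros; apply pow2_ge_0).
  pose proof window_energy_bound as Henergy. pose proof (pos_INR N).
  assert (Hsq : (INR H * S - X) ^ 2 <= (2 * INR H ^ 2) ^ 2).
  { rewrite <- pow2_abs. pose proof (Rabs_pos (INR H * S - X)). nra. }
  assert ((INR H * S) ^ 2 <= 2 * X ^ 2 + 2 * (INR H * S - X) ^ 2)
    by (pose proof (pow2_ge_0 (INR H * S - 2 * X)); nra).
  nra.
Qed.

End VanDerCorput.

Lemma vdc_bound_small eps H N S : 0 < eps -> 0 < H -> 0 <= N ->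
  8 <= eps ^ 2 * H -> 16 * H <= eps ^ 2 * N -> 8 * H <= eps * N ->
  H ^ 2 * S ^ 2 <= 2 * N * (H * N + H ^ 2 * (eps ^ 2 / 8 * N + 2 * H)) + 8 * H ^ 4 ->
  Rabs S <= eps * N.
Proof.
  intros He HH HN H1 H2 H3 V.
  assert (A1 : 8 * (H * N ^ 2) <= eps ^ 2 * H * (H * N ^ 2))
    by (apply Rmult_le_compat_r; [apply Rmult_le_pos; nra|lra]).
  assert (A2 : 16 * H * (H ^ 2 * N) <= eps ^ 2 * N * (H ^ 2 * N))
    by (apply Rmult_le_compat_r; [apply Rmult_le_pos; nra|lra]).
  assert (A3 : (8 * H) ^ 2 <= (eps * N) ^ 2) by (apply pow_incr; lra).
  assert (H ^ 2 * S ^ 2 <= H ^ 2 * (eps * N) ^ 2) by nra.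
  assert (HS : S ^ 2 <= (eps * N) ^ 2) by (apply (Rmult_le_reg_l (H ^ 2)); nra).
  rewrite <- (Rabs_right (eps * N)) by nra. rewrite <- !Rsqr_pow2 in HS. apply Rsqr_le_abs_0; auto.
Qed.

Lemma weyl_linear c f : irrational c -> has_lead 1 c f ->
  mean_to (fun n => cos (2 * PI * f n)) 0.
Proof.
  intros Hc Hf eps Heps. simpl in Hf.
  assert (Hs : 0 < Rabs (sin (PI * c))) by (apply Rabs_pos_lt, sin_PI_irrational; auto).
  destruct (eventually_le_mul (1 / Rabs (sin (PI * c))) eps Heps) as [N0 HN0].
  exists N0. intros N HN. rewrite Rmult_0_l, Rminus_0_r.
  rewrite (rsum_ext N _ (fun n => cos (2 * (PI * c) * INR n + 2 * PI * f O))).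
  - eapply Rle_trans; [apply cos_arith_sum_bound|apply HN0]; auto.
    apply sin_PI_irrational; auto.
  - intros n _. specialize (Hf n). simpl in Hf.
    replace (f n) with (f O + c * INR n) by lra. f_equal. ring.
Qed.

Theorem weyl_poly D c f : (1 <= D)%nat -> irrational c -> has_lead D c f ->
  mean_to (fun n => cos (2 * PI * f n)) 0.
Proof.
  intros HD. revert c f. induction D as [|D IH]; [lia|]. destruct D as [|D].
  { apply weyl_linear. }
  intros c f Hc Hf eps Heps.
  assert (Heps2 : 0 < eps ^ 2) by (apply pow_lt; lra).
  destruct (eventually_le_mul 8 (eps ^ 2) Heps2) as [H0 HH0].
  set (H := S H0). assert (H8 : 8 <= eps ^ 2 * INR H) by (apply HH0; unfold H; lia).
  assert (HH : 0 < INR H) by (apply lt_0_INR; unfold H; lia).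
  destruct (eventually_forall_lt (fun k N => (1 <= k)%nat ->
      Rabs (rsum N (fun n => cos (2 * PI * (f (n + k)%nat - f n)))) <= eps ^ 2 / 8 * INR N) H)
    as [N1 HN1].
  { intros k _. destruct k as [|k]; [exists O; intros; lia|].
    destruct (IH ltac:(lia) (c * INR (S (S D)) * INR (S k)) _ ltac:(apply irrational_mul_INR;
      [apply irrational_mul_INR|]; auto) (has_lead_diff D c f (S k) Hf) (eps ^ 2 / 8))
      as [N0 HN0]; [lra|].
    exists N0. intros N HN _. specialize (HN0 N HN). rewrite Rmult_0_l, Rminus_0_r in HN0. auto. }
  destruct (eventually_le_mul (16 * INR H) (eps ^ 2) Heps2) as [N2 HN2].
  destruct (eventually_le_mul (8 * INR H) eps Heps) as [N3 HN3].
  exists (N1 + N2 + N3)%nat. intros N HN. rewrite Rmult_0_l, Rminus_0_r.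
  pose proof (pos_INR N).
  apply (vdc_bound_small eps (INR H)); auto; [apply HN2; lia|apply HN3; lia|].
  apply (van_der_corput (fun n => 2 * PI * f n)); [nra|].
  intros k Hk. rewrite (rsum_ext N _ (fun n => cos (2 * PI * (f (n + k)%nat - f n))))
    by (intros; f_equal; ring).
  apply HN1; lia.
Qed.

Lemma mean_to_cos_poly D c f a phi : (1 <= D)%nat -> irrational c -> has_lead D c f ->
  mean_to (fun m => a * cos (2 * PI * f m + phi)) 0.
Proof.
  intros HD Hc Hf. pose proof PI_RGT_0.
  apply (mean_to_ext (fun m => a * cos (2 * PI * (f m + phi / (2 * PI)))));
    [intros; do 2 f_equal; field; lra|].
  rewrite <- (Rmult_0_r a). apply mean_to_scal.
  apply (weyl_poly D c); auto. apply has_lead_add; auto. apply poly_seq_const.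
Qed.

(** * Trigonometric polynomials in two variables *)

(* [(a, j, l, phi)] stands for [a cos (2 PI (j u + l v) + phi)]. *)
Definition trig_term : Type := (R * Z * Z * R)%type.

Definition term_eval (t : trig_term) (u v : R) : R :=
  let '(a, j, l, phi) := t in a * cos (2 * PI * (IZR j * u + IZR l * v) + phi).

Definition trig_eval (P : list trig_term) (u v : R) : R :=
  fold_right (fun t acc => term_eval t u v + acc) 0 P.

Definition term_mean (t : trig_term) : R :=
  let '(a, j, l, phi) := t in if (Z.eqb j 0 && Z.eqb l 0)%bool then a * cos phi else 0.

Definition trig_mean (P : list trig_term) : R :=
  fold_right (fun t acc => term_mean t + acc) 0 P.

Definition term_mul (t1 t2 : trig_term) : list trig_term :=
  let '(a1, j1, l1, phi1) := t1 in
  let '(a2, j2, l2, phi2) := t2 in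
  [(a1 * a2 / 2, (j1 + j2)%Z, (l1 + l2)%Z, phi1 + phi2);
   (a1 * a2 / 2, (j1 - j2)%Z, (l1 - l2)%Z, phi1 - phi2)].

Definition trig_mul (P1 P2 : list trig_term) : list trig_term :=
  flat_map (fun t1 => flat_map (term_mul t1) P2) P1.

Fixpoint trig_pow (P : list trig_term) (K : nat) : list trig_term :=
  match K with O => [(1, 0%Z, 0%Z, 0)] | S K' => trig_mul P (trig_pow P K') end.

Definition freq_bounded (J L : Z) (P : list trig_term) : Prop :=
  forall a j l phi, In (a, j, l, phi) P -> (Z.abs j <= J /\ Z.abs l <= L)%Z.

Lemma trig_eval_app P1 P2 u v : trig_eval (P1 ++ P2) u v = trig_eval P1 u v + trig_eval P2 u v.
Proof. induction P1; simpl; [ring|]. rewrite IHP1; ring. Qed.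

Lemma term_eval_mul t1 t2 u v : term_eval t1 u v * term_eval t2 u v = trig_eval (term_mul t1 t2) u v.
Proof.
  destruct t1 as [[[a1 j1] l1] phi1], t2 as [[[a2 j2] l2] phi2]. simpl.
  rewrite !plus_IZR, !minus_IZR.
  set (x := 2 * PI * (IZR j1 * u + IZR l1 * v) + phi1).
  set (y := 2 * PI * (IZR j2 * u + IZR l2 * v) + phi2).
  replace (2 * PI * ((IZR j1 + IZR j2) * u + (IZR l1 + IZR l2) * v) + (phi1 + phi2))
    with (x + y) by (unfold x, y; ring).
  replace (2 * PI * ((IZR j1 - IZR j2) * u + (IZR l1 - IZR l2) * v) + (phi1 - phi2))
    with (x - y) by (unfold x, y; ring).
  rewrite cos_plus, cos_minus. field.
Qed.

Lemma trig_eval_mul P1 P2 u v : trig_eval (trig_mul P1 P2) u v = trig_eval P1 u v * trig_eval P2 u v.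
Proof.
  induction P1 as [|t1 P1 IH]; simpl; [ring|]. unfold trig_mul in *. simpl.
  rewrite trig_eval_app, IH, Rmult_plus_distr_r. f_equal. clear IH.
  induction P2 as [|t2 P2 IH2]; simpl; [ring|].
  rewrite trig_eval_app, IH2, <- term_eval_mul. ring.
Qed.

Lemma trig_eval_pow P K u v : trig_eval (trig_pow P K) u v = trig_eval P u v ^ K.
Proof.
  induction K; simpl.
  - replace (2 * PI * (0 * u + 0 * v) + 0) with 0 by ring. rewrite cos_0. ring.
  - rewrite trig_eval_mul, IHK. auto.
Qed.

Lemma freq_bounded_mono J J' L L' P :
  (J <= J')%Z -> (L <= L')%Z -> freq_bounded J L P -> freq_bounded J' L' P.
Proof. intros H1 H2 H a j l phi Hin. destruct (H a j l phi Hin). lia. Qed.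

Lemma freq_bounded_mul J1 J2 L1 L2 P1 P2 : freq_bounded J1 L1 P1 -> freq_bounded J2 L2 P2 ->
  freq_bounded (J1 + J2) (L1 + L2) (trig_mul P1 P2).
Proof.
  intros H1 H2 a j l phi Hin. unfold trig_mul in Hin.
  apply in_flat_map in Hin as [[[[a1 j1] l1] phi1] [Ht1 Hin]].
  apply in_flat_map in Hin as [[[[a2 j2] l2] phi2] [Ht2 Hin]].
  specialize (H1 _ _ _ _ Ht1). specialize (H2 _ _ _ _ Ht2). simpl in Hin.
  destruct Hin as [E|[E|[]]]; inversion E; subst; lia.
Qed.

Lemma freq_bounded_pow J L P K : (0 <= J)%Z -> (0 <= L)%Z -> freq_bounded J L P ->
  freq_bounded (Z.of_nat K * J) (Z.of_nat K * L) (trig_pow P K).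
Proof.
  intros HJ HL H. induction K; intros a j l phi Hin.
  - destruct Hin as [E|[]]. inversion E; subst. simpl. lia.
  - pose proof (freq_bounded_mul _ _ _ _ _ _ H IHK a j l phi Hin). lia.
Qed.

Lemma mean_to_trig_eval (Q T : nat -> R) P :
  (forall a j l phi, In (a, j, l, phi) P -> (j <> 0 \/ l <> 0)%Z ->
     mean_to (fun m => a * cos (2 * PI * (IZR j * Q m + IZR l * T m) + phi)) 0) ->
  mean_to (fun m => trig_eval P (Q m) (T m)) (trig_mean P).
Proof.
  induction P as [|t P IH]; intros H; simpl; [apply mean_to_const|].
  apply mean_to_add; [|apply IH; intros; apply (H a j l phi); simpl; auto].
  destruct t as [[[a j] l] phi]. simpl.
  destruct (Z.eqb_spec j 0), (Z.eqb_spec l 0); simpl;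
    [|apply (H a j l phi); simpl; auto..].
  subst. apply (mean_to_ext (fun _ => a * cos phi)); [intros; do 2 f_equal; ring|].
  apply mean_to_const.
Qed.

Lemma cos_roots_of_unity_sum (M j : nat) g : (0 < j < M)%nat ->
  rsum M (fun p => cos (2 * PI * (INR j * (INR p / INR M)) + g)) = 0.
Proof.
  intros Hj. pose proof PI_RGT_0.
  assert (HM : 0 < INR M) by (apply lt_0_INR; lia).
  assert (Hj0 : 0 < INR j) by (apply lt_0_INR; lia).
  assert (HjM : INR j < INR M) by (apply lt_INR; lia).
  set (a := PI * INR j / INR M).
  assert (Ha : 0 < sin a).
  { apply sin_gt_0; unfold a.
    - apply Rdiv_lt_0_compat; nra.
    - apply (Rmult_lt_reg_r (INR M)); auto. field_simplify; nra. }
  rewrite (rsum_ext M _ (fun n => cos (2 * a * INR n + g))) by (intros; unfold a; f_equal; field; lra).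
  apply (Rmult_eq_reg_l (2 * sin a)); [|lra]. rewrite cos_arith_sum.
  replace (2 * a * INR M + g - a) with ((g - a) + 2 * INR j * PI) by (unfold a; field; lra).
  rewrite sin_period. ring.
Qed.

Lemma cos_roots_of_unity_sum_Z (M : nat) (j : Z) g : (0 < Z.abs j < Z.of_nat M)%Z ->
  rsum M (fun p => cos (2 * PI * (IZR j * (INR p / INR M)) + g)) = 0.
Proof.
  intros Hj. destruct (Z_lt_le_dec 0 j).
  - rewrite <- (Z2Nat.id j), <- INR_IZR_INZ by lia. apply cos_roots_of_unity_sum. lia.
  - rewrite (rsum_ext M _ (fun p => cos (2 * PI * (INR (Z.to_nat (- j)) * (INR p / INR M)) + - g))).
    + apply cos_roots_of_unity_sum. lia.
    + intros p _. rewrite (INR_IZR_INZ (Z.to_nat (- j))), Z2Nat.id, opp_IZR, <- cos_neg by lia.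
      f_equal. ring.
Qed.

(* Frequencies below [M] average out over the grid, being sums of [M]-th roots of unity. *)
Lemma trig_grid_sum P M u0 v0 : (1 <= M)%nat ->
  freq_bounded (Z.of_nat M - 1) (Z.of_nat M - 1) P ->
  rsum M (fun p => rsum M (fun q => trig_eval P (u0 + INR p / INR M) (v0 + INR q / INR M)))
  = INR M * INR M * trig_mean P.
Proof.
  intros HM. induction P as [|[[[a j] l] phi] P IH]; intros Hfb; simpl.
  { rewrite (rsum_ext M _ (fun _ => 0)), rsum_const; [ring|]. intros. rewrite rsum_const. ring. }
  rewrite (rsum_ext M _ (fun p =>
      rsum M (fun q => term_eval (a, j, l, phi) (u0 + INR p / INR M) (v0 + INR q / INR M))
      + rsum M (fun q => trig_eval P (u0 + INR p / INR M) (v0 + INR q / INR M))))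
    by (intros; apply rsum_add).
  rewrite rsum_add, IH by (intros ? ? ? ? Hin; apply (Hfb _ _ _ _ (in_cons _ _ _ Hin))).
  destruct (Hfb a j l phi (in_eq _ _)) as [Hj Hl]. simpl.
  destruct (Z.eqb_spec j 0) as [->|Hj0]; destruct (Z.eqb_spec l 0) as [->|Hl0]; simpl.
  - rewrite (rsum_ext M _ (fun _ => INR M * (a * cos phi))), rsum_const; [ring|].
    intros. rewrite <- rsum_const. apply rsum_ext. intros. do 3 f_equal. ring.
  - rewrite (rsum_ext M _ (fun _ => 0)), rsum_const; [ring|]. intros p _.
    rewrite rsum_scal, (rsum_ext M _ (fun q =>
      cos (2 * PI * (IZR l * (INR q / INR M)) + (2 * PI * (IZR l * v0) + phi)))).
    + rewrite cos_roots_of_unity_sum_Z by lia. ring.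
    + intros. f_equal. ring.
  - rewrite rsum_swap, (rsum_ext M _ (fun _ => 0)), rsum_const; [ring|]. intros q _.
    rewrite rsum_scal, (rsum_ext M _ (fun p =>
      cos (2 * PI * (IZR j * (INR p / INR M)) + (2 * PI * (IZR j * u0) + phi)))).
    + rewrite cos_roots_of_unity_sum_Z by lia. ring.
    + intros. f_equal. ring.
  - rewrite rsum_swap, (rsum_ext M _ (fun _ => 0)), rsum_const; [ring|]. intros q _.
    rewrite rsum_scal, (rsum_ext M _ (fun p => cos (2 * PI * (IZR j * (INR p / INR M))
      + (2 * PI * (IZR j * u0 + IZR l * (v0 + INR q / INR M)) + phi)))).
    + rewrite cos_roots_of_unity_sum_Z by lia. ring.
    + intros. f_equal. ring.
Qed.

Lemma trig_mean_lower_bound P K u0 v0 : freq_bounded (Z.of_nat K) (Z.of_nat K) P ->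
  (forall u v, 0 <= trig_eval P u v) -> 1 <= trig_eval P u0 v0 ->
  1 <= (INR K + 1) ^ 2 * trig_mean P.
Proof.
  intros Hfb Hpos H1.
  pose proof (trig_grid_sum P (S K) u0 v0 ltac:(lia)
    ltac:(eapply freq_bounded_mono; [| |exact Hfb]; lia)) as E.
  assert (Hfirst : trig_eval P (u0 + INR 0 / INR (S K)) (v0 + INR 0 / INR (S K)) <=
    rsum (S K) (fun p => rsum (S K) (fun q =>
      trig_eval P (u0 + INR p / INR (S K)) (v0 + INR q / INR (S K))))).
  { eapply Rle_trans; [|apply rsum_ge_first; [lia|intros; apply rsum_nonneg; auto]].
    apply (rsum_ge_first (S K) (fun q => trig_eval P _ _)); auto. lia. }
  rewrite E in Hfirst. simpl (INR 0) in Hfirst. unfold Rdiv in Hfirst.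
  rewrite !Rmult_0_l, !Rplus_0_r in Hfirst. rewrite <- S_INR. lra.
Qed.

(* High powers of [cos (PI (u - u0))^2] concentrate near [u0] modulo one and
   serve as bump functions. *)
Definition kernel_u (u0 : R) : list trig_term :=
  [(1/2, 0%Z, 0%Z, 0); (1/2, 1%Z, 0%Z, - (2 * PI * u0))].
Definition kernel_v (v0 : R) : list trig_term :=
  [(1/2, 0%Z, 0%Z, 0); (1/2, 0%Z, 1%Z, - (2 * PI * v0))].

Lemma kernel_u_eval u0 u v : trig_eval (kernel_u u0) u v = cos (PI * (u - u0)) ^ 2.
Proof.
  simpl. replace (2 * PI * (1 * u + 0 * v) + - (2 * PI * u0)) with (2 * (PI * (u - u0))) by ring.
  replace (2 * PI * (0 * u + 0 * v) + 0) with 0 by ring.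
  rewrite cos_0, cos_2a_cos. field.
Qed.

Lemma kernel_v_eval v0 u v : trig_eval (kernel_v v0) u v = cos (PI * (v - v0)) ^ 2.
Proof.
  simpl. replace (2 * PI * (0 * u + 1 * v) + - (2 * PI * v0)) with (2 * (PI * (v - v0))) by ring.
  replace (2 * PI * (0 * u + 0 * v) + 0) with 0 by ring.
  rewrite cos_0, cos_2a_cos. field.
Qed.

Lemma freq_bounded_kernel_u u0 : freq_bounded 1 0 (kernel_u u0).
Proof. intros a j l phi [E|[E|[]]]; inversion E; subst; simpl; lia. Qed.

Lemma freq_bounded_kernel_v v0 : freq_bounded 0 1 (kernel_v v0).
Proof. intros a j l phi [E|[E|[]]]; inversion E; subst; simpl; lia. Qed.

Definition near_mod1 (w w0 eta : R) : Prop := exists k : Z, Rabs (w - w0 - IZR k) < eta.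

Lemma cos_sq_add_IZR_PI x k : cos (x + IZR k * PI) ^ 2 = cos x ^ 2.
Proof.
  assert (Hs : sin (IZR k * PI) = 0) by (apply sin_eq_0_1; exists k; auto).
  pose proof (sin2_cos2 (IZR k * PI)) as H. rewrite Hs in H. unfold Rsqr in H.
  rewrite cos_plus, Hs, Rmult_0_r, Rminus_0_r.
  rewrite Rpow_mult_distr. replace (cos (IZR k * PI) ^ 2) with 1 by (simpl; lra). ring.
Qed.

Lemma cos_sq_PI_range eta : 0 < eta <= 1/2 -> 0 <= cos (PI * eta) ^ 2 < 1.
Proof.
  intros He. pose proof PI_RGT_0.
  assert (0 <= cos (PI * eta)) by (apply cos_ge_0; nra).
  assert (cos (PI * eta) < 1) by (rewrite <- cos_0; apply cos_decreasing_1; nra).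
  split; nra.
Qed.

Lemma cos_sq_not_near w w0 eta : 0 < eta <= 1/2 -> ~ near_mod1 w w0 eta ->
  cos (PI * (w - w0)) ^ 2 <= cos (PI * eta) ^ 2.
Proof.
  intros He Hfar. pose proof PI_RGT_0.
  set (k := Int_part (w - w0)). set (t := frac_part (w - w0)).
  assert (Ew : w - w0 = IZR k + t) by apply Rplus_Int_part_frac_part.
  pose proof (base_fp (w - w0)) as [Ht0 Ht1]. fold t in Ht0, Ht1.
  assert (H1 : eta <= t).
  { apply Rnot_lt_le. intros Hlt. apply Hfar. exists k.
    rewrite Rabs_right; [|rewrite <- Rminus_plus_distr]; lra. }
  assert (H2 : eta <= 1 - t).
  { apply Rnot_lt_le. intros Hlt. apply Hfar. exists (k + 1)%Z. rewrite plus_IZR.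
    rewrite Rabs_left; lra. }
  replace (PI * (w - w0)) with (PI * t + IZR k * PI) by (rewrite Ew; ring).
  rewrite cos_sq_add_IZR_PI.
  assert (Hc : forall s, eta <= s <= 1/2 -> 0 <= cos (PI * s) <= cos (PI * eta)).
  { intros s Hs. split; [apply cos_ge_0; nra|].
    destruct (Req_dec s eta) as [->|Hne]; [lra|]. left. apply cos_decreasing_1; nra. }
  destruct (Rle_dec t (1/2)).
  - destruct (Hc t); [lra|]. nra.
  - replace (PI * t) with (PI - PI * (1 - t)) by ring. rewrite Rtrigo_facts.cos_pi_minus.
    destruct (Hc (1 - t)); [lra|]. nra.
Qed.
Lemma sq_mul_pow_small q : 0 <= q < 1 -> exists K, (INR K + 1) ^ 2 * q ^ K < 1.
Proof.
  intros Hq. destruct (Req_dec q 0) as [->|Hq0]; [exists 1%nat; simpl; lra|].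
  (* With [q (1 + r) = 1], Bernoulli gives [q^L <= 1 / (L r)]; take [K = 3 L]. *)
  set (r := 1 / q - 1).
  assert (Hr : 0 < r).
  { unfold r. assert (1 < 1 / q); [|lra].
    apply (Rmult_lt_reg_r q); [lra|]. field_simplify; lra. }
  assert (Hr3 : 0 < r ^ 3) by (apply pow_lt; auto).
  destruct (INR_archimed (r ^ 3) 17 Hr3) as [L HL].
  assert (HL1 : 1 <= INR L).
  { destruct L; [simpl in HL; lra|]. rewrite S_INR. pose proof (pos_INR L). lra. }
  set (x := q ^ L). set (y := INR L * r).
  assert (Hx : 0 <= x) by (apply pow_le; lra).
  assert (Hxy : x * y <= 1).
  { assert (E : x * (1 + r) ^ L = 1)
      by (unfold x, r; rewrite <- Rpow_mult_distr; replace (q * (1 + (1 / q - 1))) with 1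
            by (field; lra); apply pow1).
    pose proof (poly L r Hr). unfold y. nra. }
  exists (L * 3)%nat. rewrite pow_mult, mult_INR. simpl (INR 3). fold x.
  assert (Hy3 : 17 * INR L ^ 2 <= y ^ 3)
    by (unfold y; rewrite Rpow_mult_distr; nra).
  assert (H33 : x ^ 3 * y ^ 3 <= 1).
  { rewrite <- Rpow_mult_distr. rewrite <- (pow1 3). apply pow_incr.
    split; [apply Rmult_le_pos; [lra|unfold y; nra]|lra]. }
  assert (0 <= x ^ 3) by (apply pow_le; auto).
  assert ((3 * INR L + 1) ^ 2 <= 16 * INR L ^ 2) by nra.
  assert (x ^ 3 * (3 * INR L + 1) ^ 2 <= x ^ 3 * (16 * INR L ^ 2)) by (apply Rmult_le_compat_l; auto).
  nra.
Qed.

Lemma cos_sq_pow_range w K : 0 <= (cos w ^ 2) ^ K <= 1.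
Proof.
  pose proof (COS_bound w). split; [apply pow_le, pow2_ge_0|].
  rewrite <- (pow1 K). apply pow_incr. split; [apply pow2_ge_0|nra].
Qed.

Lemma kernel_mean_bound (Q T : nat -> R) P K u0 v0 B :
  freq_bounded (Z.of_nat K) (Z.of_nat K) P -> (forall u v, 0 <= trig_eval P u v) ->
  1 <= trig_eval P u0 v0 -> mean_to (fun m => trig_eval P (Q m) (T m)) (trig_mean P) ->
  (forall m, trig_eval P (Q m) (T m) <= B) -> 1 <= (INR K + 1) ^ 2 * B.
Proof.
  intros Hfb Hpos H1 Hmean HB.
  pose proof (trig_mean_lower_bound P K u0 v0 Hfb Hpos H1).
  assert (trig_mean P <= B) by exact (mean_to_le _ _ _ _ HB Hmean (mean_to_const B)).
  pose proof (pow2_ge_0 (INR K + 1)). nra.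
Qed.

(* The easy direction of Weyl's criterion, for boxes. *)
Lemma hits_box (Q T : nat -> R) u0 v0 eta : 0 < eta <= 1/2 ->
  (forall j l, (j <> 0 \/ l <> 0)%Z -> forall a phi,
     mean_to (fun m => a * cos (2 * PI * (IZR j * Q m + IZR l * T m) + phi)) 0) ->
  exists m, near_mod1 (Q m) u0 eta /\ near_mod1 (T m) v0 eta.
Proof.
  intros He HW. apply NNPP. intros Hno.
  set (q := cos (PI * eta) ^ 2). destruct (cos_sq_PI_range eta He) as [Hq0 Hq1]. fold q in Hq0, Hq1.
  destruct (sq_mul_pow_small q) as [K HK]; [lra|].
  set (P := trig_mul (trig_pow (kernel_u u0) K) (trig_pow (kernel_v v0) K)).
  assert (Eval : forall u v, trig_eval P u v
            = (cos (PI * (u - u0)) ^ 2) ^ K * (cos (PI * (v - v0)) ^ 2) ^ K)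
    by (intros; unfold P; rewrite trig_eval_mul, !trig_eval_pow, kernel_u_eval, kernel_v_eval; auto).
  apply (Rlt_not_le _ _ HK), (kernel_mean_bound Q T P K u0 v0).
  - eapply freq_bounded_mono; [| |apply freq_bounded_mul; apply freq_bounded_pow;
      [| |apply freq_bounded_kernel_u| | |apply freq_bounded_kernel_v]]; lia.
  - intros u v. rewrite Eval.
    pose proof (cos_sq_pow_range (PI * (u - u0)) K). pose proof (cos_sq_pow_range (PI * (v - v0)) K).
    nra.
  - rewrite Eval, !Rminus_diag, !Rmult_0_r, cos_0, !pow1. lra.
  - apply mean_to_trig_eval. intros. apply HW. auto.
  - intros m. rewrite Eval.
    pose proof (cos_sq_pow_range (PI * (Q m - u0)) K).
    pose proof (cos_sq_pow_range (PI * (T m - v0)) K).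
    assert (Hpow : forall w w0, ~ near_mod1 w w0 eta -> (cos (PI * (w - w0)) ^ 2) ^ K <= q ^ K)
      by (intros; apply pow_incr; split; [apply pow2_ge_0|apply cos_sq_not_near; auto]).
    destruct (classic (near_mod1 (Q m) u0 eta)) as [HQ|HQ].
    + assert (HT : ~ near_mod1 (T m) v0 eta) by (intros HT; apply Hno; exists m; auto).
      pose proof (Hpow _ _ HT). nra.
    + pose proof (Hpow _ _ HQ). nra.
Qed.

Lemma hits_interval (Q : nat -> R) u0 eta : 0 < eta <= 1/2 ->
  (forall j, (j <> 0)%Z -> forall a phi,
     mean_to (fun m => a * cos (2 * PI * (IZR j * Q m) + phi)) 0) ->
  exists m, near_mod1 (Q m) u0 eta.
Proof.
  intros He HW. apply NNPP. intros Hno.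
  set (q := cos (PI * eta) ^ 2). destruct (cos_sq_PI_range eta He) as [Hq0 Hq1]. fold q in Hq0, Hq1.
  destruct (sq_mul_pow_small q) as [K HK]; [lra|].
  set (P := trig_pow (kernel_u u0) K).
  assert (Eval : forall u v, trig_eval P u v = (cos (PI * (u - u0)) ^ 2) ^ K)
    by (intros; unfold P; rewrite trig_eval_pow, kernel_u_eval; auto).
  assert (HP : freq_bounded (Z.of_nat K * 1) (Z.of_nat K * 0) P)
    by (apply freq_bounded_pow; [lia|lia|apply freq_bounded_kernel_u]).
  apply (Rlt_not_le _ _ HK), (kernel_mean_bound Q (fun _ => 0) P K u0 0).
  - eapply freq_bounded_mono; [| |exact HP]; lia.
  - intros u v. rewrite Eval. apply cos_sq_pow_range.
  - rewrite Eval, Rminus_diag, Rmult_0_r, cos_0, !pow1. lra.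
  - apply mean_to_trig_eval. intros a j l phi Hin Hjl. destruct (HP a j l phi Hin).
    assert (l = 0%Z) by lia. subst l.
    apply (mean_to_ext (fun m => a * cos (2 * PI * (IZR j * Q m) + phi)));
      [intros; simpl; do 3 f_equal; ring|apply HW; lia].
  - intros m. rewrite Eval. apply pow_incr. split; [apply pow2_ge_0|].
    apply cos_sq_not_near; auto. intros Hn. apply Hno. exists m. auto.
Qed.

(** * The map [f] modulo one *)

Definition is_int (v : R) : Prop := exists z : Z, v = IZR z.

Lemma is_int_IZR z : is_int (IZR z).
Proof. exists z. auto. Qed.

Lemma is_int_INR n : is_int (INR n).
Proof. exists (Z.of_nat n). apply INR_IZR_INZ. Qed.

Lemma is_int_add a b : is_int a -> is_int b -> is_int (a + b).
Proof. intros [x ->] [y ->]. exists (x + y)%Z. rewrite plus_IZR. auto. Qed.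

Lemma is_int_sub a b : is_int a -> is_int b -> is_int (a - b).
Proof. intros [x ->] [y ->]. exists (x - y)%Z. rewrite minus_IZR. auto. Qed.

Lemma is_int_mul a b : is_int a -> is_int b -> is_int (a * b).
Proof. intros [x ->] [y ->]. exists (x * y)%Z. rewrite mult_IZR. auto. Qed.

Lemma is_int_frac_sub a : is_int (frac a - a).
Proof.
  exists (- Int_part a)%Z. rewrite opp_IZR. unfold frac.
  pose proof (Rplus_Int_part_frac_part a). lra.
Qed.

Lemma frac_eq_of_int_sub a a' : 0 <= a < 1 -> 0 <= a' < 1 -> is_int (a - a') -> a = a'.
Proof.
  intros H1 H2 [z Hz]. assert (-1 < IZR z < 1) by lra.
  assert (z = 0%Z) by (destruct H as [Hl Hr]; apply lt_IZR in Hl; apply lt_IZR in Hr; lia).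
  subst. simpl in Hz. lra.
Qed.

Lemma binom_n_0 n : binom n 0 = 1.
Proof. unfold binom, Binomial.C. rewrite Nat.sub_0_r. simpl. field. apply INR_fact_neq_0. Qed.

Lemma binom_n_n n : binom n n = 1.
Proof. unfold binom, Binomial.C. rewrite Nat.sub_diag. simpl. field. apply INR_fact_neq_0. Qed.

Lemma binom_int i j : (j <= i)%nat -> is_int (binom i j).
Proof.
  revert j; induction i as [|i IH]; intros j Hj.
  - replace j with O by lia. rewrite binom_n_0. apply (is_int_IZR 1).
  - destruct j as [|j]; [rewrite binom_n_0; apply (is_int_IZR 1)|].
    destruct (Nat.eq_dec j i) as [->|Hne]; [rewrite binom_n_n; apply (is_int_IZR 1)|].
    unfold binom. rewrite <- pascal by lia. apply is_int_add; apply IH; lia.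
Qed.

Lemma binom_succ_pred n : binom (S n) n = INR (S n).
Proof.
  induction n; [rewrite binom_n_0; auto|].
  unfold binom in *. rewrite <- pascal, IHn by lia. fold (binom (S n) (S n)).
  rewrite binom_n_n, (S_INR (S n)). auto.
Qed.

Lemma sum1_ext k f g : (forall j, (1 <= j <= k)%nat -> f j = g j) -> sum1 k f = sum1 k g.
Proof.
  induction k; simpl; intros H; auto.
  rewrite IHk, H by (try intros; try apply H; lia). auto.
Qed.

Lemma sum1_add k f g : sum1 k (fun j => f j + g j) = sum1 k f + sum1 k g.
Proof. induction k; simpl; [ring|]. rewrite IHk. ring. Qed.

Lemma sum1_sub k f g : sum1 k (fun j => f j - g j) = sum1 k f - sum1 k g.
Proof. induction k; simpl; [ring|]. rewrite IHk. ring. Qed.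

Lemma is_int_sum1 k g : (forall j, (1 <= j <= k)%nat -> is_int (g j)) -> is_int (sum1 k g).
Proof.
  induction k; simpl; intros H; [apply (is_int_IZR 0)|].
  apply is_int_add; [apply IHk; intros|]; apply H; lia.
Qed.

Lemma is_int_sum1_binom i g :
  (forall j, (1 <= j <= i)%nat -> is_int (g j)) -> is_int (sum1 i (fun j => binom i j * g j)).
Proof.
  intros H. apply is_int_sum1. intros j Hj.
  apply is_int_mul; [apply binom_int; lia|auto].
Qed.

Definition lift_map (zeta : R) (X : nat -> R) : nat -> R :=
  fun i => zeta + sum1 i (fun j => binom i j * X j).

Lemma Mmul_lift_map : Mmul = lift_map 0.
Proof.
  apply functional_extensionality. intros r. apply functional_extensionality. intros i.
  unfold Mmul, lift_map. ring.
Qed.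

Lemma not_stable_not_int d r : ~ stable d r ->
  exists k, ~ is_int (Nat.iter k (lift_map 0) r d).
Proof.
  intros Hns. apply NNPP. intros Hall. apply Hns. intros k _. apply NNPP. intros Hk.
  apply Hall. exists k. rewrite <- Mmul_lift_map. auto.
Qed.

Lemma fmap_sub_lift_map_int zeta X Y i :
  (forall j, (1 <= j <= i)%nat -> is_int (X j - Y j)) ->
  is_int (fmap zeta X i - lift_map zeta Y i).
Proof.
  intros H. unfold fmap, lift_map.
  assert (E : sum1 i (fun j => binom i j * (X j - Y j))
              = sum1 i (fun j => binom i j * X j) - sum1 i (fun j => binom i j * Y j))
    by (rewrite <- sum1_sub; apply sum1_ext; intros; ring).
  replace (frac (zeta + sum1 i (fun j => binom i j * X j)) - (zeta + sum1 i (fun j => binom i j * Y j)))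
    with ((frac (zeta + sum1 i (fun j => binom i j * X j)) - (zeta + sum1 i (fun j => binom i j * X j)))
          + sum1 i (fun j => binom i j * (X j - Y j))) by (rewrite E; ring).
  apply is_int_add; [apply is_int_frac_sub|apply is_int_sum1_binom; auto].
Qed.

Lemma fmap_sub_fmap_int zeta X Y r i :
  (forall j, (1 <= j <= i)%nat -> is_int (Y j - X j - r j)) ->
  is_int (fmap zeta Y i - fmap zeta X i - lift_map 0 r i).
Proof.
  intros H.
  replace (fmap zeta Y i - fmap zeta X i - lift_map 0 r i)
    with ((fmap zeta Y i - lift_map zeta (fun j => X j + r j) i) - (fmap zeta X i - lift_map zeta X i))
    by (unfold lift_map; rewrite (sum1_ext i (fun j => binom i j * (X j + r j))
          (fun j => binom i j * X j + binom i j * r j)) by (intros; ring);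
        rewrite sum1_add; ring).
  apply is_int_sub; apply fmap_sub_lift_map_int; intros j Hj.
  - replace (Y j - (X j + r j)) with (Y j - X j - r j) by ring. auto.
  - rewrite Rminus_diag. apply (is_int_IZR 0).
Qed.

Lemma iter_fmap_sub_lift_map_int zeta x n i :
  is_int (Nat.iter n (fmap zeta) x i - Nat.iter n (lift_map zeta) x i).
Proof.
  revert i; induction n; intros i.
  - simpl. rewrite Rminus_diag. apply (is_int_IZR 0).
  - apply fmap_sub_lift_map_int. intros. apply IHn.
Qed.

Lemma iter_fmap_sub_iter_fmap_int zeta x y n i :
  is_int (Nat.iter n (fmap zeta) y i - Nat.iter n (fmap zeta) x i
          - Nat.iter n (lift_map 0) (fun j => y j - x j) i).
Proof.
  revert i; induction n; intros i.
  - simpl. replace (y i - x i - (y i - x i)) with 0 by ring. apply (is_int_IZR 0).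
  - apply fmap_sub_fmap_int. intros. apply IHn.
Qed.

(* Each step adds [zeta] and [i] times the previous coordinate to the [i]-th
   coordinate, so the [i]-th coordinate of the orbit grows like [zeta n^i]. *)
Lemma lift_map_iter_has_lead zeta x i : (1 <= i)%nat ->
  has_lead i zeta (fun n => Nat.iter n (lift_map zeta) x i).
Proof.
  induction i as [i IH] using lt_wf_ind. intros Hi.
  set (G := fun j n => Nat.iter n (lift_map zeta) x j).
  assert (Hstep : forall j n, G (S j) (S n) - G (S j) n
                  = zeta + sum1 j (fun l => binom (S j) l * G l n)).
  { intros j n. unfold G. simpl. unfold lift_map at 1. simpl. rewrite binom_n_n. ring. }
  destruct i as [|[|i]]; [lia| |].
  - intros n. induction n; [simpl; ring|].
    change (G 1%nat (S n) - zeta * INR (S n) ^ 1 = G 1%nat 0%nat - zeta * INR 0 ^ 1).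
    pose proof (Hstep O n) as E. unfold G in *. simpl sum1 in E. rewrite S_INR. simpl pow in *. lra.
  - apply has_lead_antidiff.
    apply (has_lead_ext _ _ (fun n => binom (S (S i)) (S i) * G (S i) n
                          + (zeta + sum1 i (fun l => binom (S (S i)) l * G l n))));
      [intros n; unfold G in *; cbv beta; rewrite Hstep; simpl; ring|].
    rewrite binom_succ_pred, Rmult_comm.
    apply has_lead_add; [apply has_lead_scal, IH; lia|].
    simpl pred. apply poly_seq_add; [apply poly_seq_const|].
    apply poly_seq_sum1. intros j Hj. apply poly_seq_scal, (poly_seq_le j); [lia|].
    apply (has_lead_poly_seq j zeta), IH; lia.
Qed.

(** * Polynomial sequences modulo one *)

Lemma pow_add_sub_pow_mult n q k : exists z : Z, INR (n + q) ^ k - INR n ^ k = INR q * IZR z.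
Proof.
  induction k as [|k [z Hz]]; [exists 0%Z; simpl; ring|].
  exists (Z.of_nat (n + q) * z + Z.of_nat (n ^ k))%Z.
  rewrite plus_IZR, mult_IZR, <- !INR_IZR_INZ, pow_INR. simpl pow.
  replace (INR (n + q) * INR (n + q) ^ k - INR n * INR n ^ k)
    with (INR (n + q) * (INR (n + q) ^ k - INR n ^ k) + (INR (n + q) - INR n) * INR n ^ k) by ring.
  rewrite Hz, plus_INR. ring.
Qed.

Lemma rational_nat_denominator c : is_rational c ->
  exists (p : Z) (Q : nat), (1 <= Q)%nat /\ c = IZR p / INR Q.
Proof.
  intros [p [q [Hq E]]]. destruct (Z_lt_le_dec 0 q).
  - exists p, (Z.to_nat q). split; [lia|]. rewrite INR_IZR_INZ, Z2Nat.id by lia. auto.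
  - exists (- p)%Z, (Z.to_nat (- q)). split; [lia|]. rewrite INR_IZR_INZ, Z2Nat.id by lia.
    rewrite E, !opp_IZR. field. apply not_0_IZR. auto.
Qed.

Lemma is_int_sub_periodic g q : (forall n, is_int (g (n + q)%nat - g n)) ->
  forall t n, is_int (g (n + t * q)%nat - g n).
Proof.
  intros H t. induction t; intros n.
  - rewrite Nat.add_0_r, Rminus_diag. apply (is_int_IZR 0).
  - replace (g (n + S t * q)%nat - g n)
      with ((g (n + t * q + q)%nat - g (n + t * q)%nat) + (g (n + t * q)%nat - g n))
      by (replace (n + t * q + q)%nat with (n + S t * q)%nat by lia; ring).
    apply is_int_add; auto.
Qed.

(* Induction on the degree, peeling off rational leading coefficients. *)
Lemma poly_seq_mod1_dichotomy D f : poly_seq D f ->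
  (exists q, (1 <= q)%nat /\ forall n, is_int (f (n + q)%nat - f n)) \/
  (exists q e c T, (1 <= q)%nat /\ (1 <= e <= D)%nat /\ irrational c /\ has_lead e c T /\
     forall m, is_int (f (q * m)%nat - T m)).
Proof.
  revert f; induction D as [|D IH]; intros f Hf.
  { left. exists 1%nat. split; auto. intros n. simpl in Hf.
    rewrite (Hf (n + 1)%nat), (Hf n), Rminus_diag. apply (is_int_IZR 0). }
  destruct (poly_seq_has_lead D f Hf) as [c Hc].
  destruct (classic (is_rational c)) as [Hr|Hi].
  2:{ right. exists 1%nat, (S D), c, f. repeat split; auto; try lia.
      intros m. rewrite Nat.mul_1_l, Rminus_diag. apply (is_int_IZR 0). }
  destruct (rational_nat_denominator c Hr) as [p [Q [HQ Ec]]].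
  assert (HQ0 : INR Q <> 0) by (apply not_0_INR; lia).
  set (g := fun n => f n - c * INR n ^ S D) in Hc.
  destruct (IH g Hc) as [[q1 [Hq1 Hg]]|[q1 [e [c' [T [Hq1 [He [Hc' [HT Hg]]]]]]]]].
  - left. exists (Q * q1)%nat. split; [lia|]. intros n.
    destruct (pow_add_sub_pow_mult n (Q * q1) (S D)) as [z Hz].
    replace (f (n + Q * q1)%nat - f n)
      with ((g (n + Q * q1)%nat - g n) + IZR p * INR q1 * IZR z).
    + apply is_int_add; [apply (is_int_sub_periodic g q1 Hg Q n)|].
      apply is_int_mul; [apply is_int_mul|]; [apply is_int_IZR|apply is_int_INR|apply is_int_IZR].
    + unfold g. replace (c * INR (n + Q * q1) ^ S D)
        with (c * (INR (n + Q * q1) ^ S D - INR n ^ S D) + c * INR n ^ S D) by ring.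
      rewrite Hz, Ec, mult_INR. field. auto.
  - right. exists (Q * q1)%nat, e, (c' * INR Q ^ e), (fun m => T (0 + Q * m)%nat).
    repeat split; try lia; [apply irrational_mul_pow; auto|apply has_lead_affine; auto|].
    intros m. specialize (Hg (Q * m)%nat).
    replace (f (Q * q1 * m)%nat - T (0 + Q * m)%nat)
      with ((g (q1 * (Q * m))%nat - T (Q * m)%nat) + IZR p * INR (q1 * m * (Q * q1 * m) ^ D)).
    + apply is_int_add; [auto|apply is_int_mul; [apply is_int_IZR|apply is_int_INR]].
    + unfold g. replace (q1 * (Q * m))%nat with (Q * q1 * m)%nat by lia. simpl (0 + Q * m)%nat.
      replace (INR (Q * q1 * m) ^ S D) with (INR Q * INR (q1 * m * (Q * q1 * m) ^ D)).
      * rewrite Ec. field. auto.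
      * rewrite <- mult_INR, <- pow_INR. f_equal. simpl. lia.
Qed.

(** * The partition [U_t] near [log_b 2] *)

Lemma logb_2_range b : (5 <= b)%nat -> 0 < logb b 2 < 1/2.
Proof.
  intros Hb. unfold logb.
  assert (H4 : 4 < INR b) by (replace 4 with (INR 4) by (simpl; ring); apply lt_INR; lia).
  assert (Hln : ln 4 < ln (INR b)) by (apply ln_increasing; lra).
  replace 4 with (2 * 2) in Hln by ring. rewrite ln_mult in Hln by lra.
  assert (0 < ln 2) by (rewrite <- ln_1; apply ln_increasing; lra).
  split; [apply Rdiv_lt_0_compat; lra|].
  apply (Rmult_lt_reg_r (ln (INR b))); [lra|]. field_simplify; lra.
Qed.

Lemma logb_2_le b t : (5 <= b)%nat -> (2 <= t)%nat -> logb b 2 <= logb b (INR t).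
Proof.
  intros Hb Ht. unfold logb, Rdiv.
  assert (0 < ln (INR b)) by (rewrite <- ln_1; apply ln_increasing; [lra|apply lt_1_INR; lia]).
  apply Rmult_le_compat_r; [left; apply Rinv_0_lt_compat; auto|].
  assert (H2 : 2 <= INR t) by (replace 2 with (INR 2) by (simpl; ring); apply le_INR; auto).
  destruct (Req_dec (INR t) 2) as [->|Hne]; [lra|]. left. apply ln_increasing; lra.
Qed.

Lemma torus_closure_coord_approx d A z eps : (1 <= d)%nat ->
  (forall u, A u -> 0 <= u d < 1) -> torus_closure d A z ->
  0 < eps -> eps <= z d -> eps <= 1 - z d -> exists u, A u /\ Rabs (z d - u d) < eps.
Proof.
  intros Hd HA Hz Heps H0 H1. destruct (Hz eps Heps) as [u [Au Hk]].
  destruct (Hk d ltac:(lia)) as [k Hk']. destruct (HA u Au).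
  exists u. split; auto. apply Rabs_def2 in Hk' as [Hlt Hgt].
  destruct (Z.lt_trichotomy k 0) as [Hk0|[->|Hk0]].
  - assert (IZR k <= -1) by (apply IZR_le; lia). lra.
  - rewrite Rminus_0_r in *. apply Rabs_def1; lra.
  - assert (1 <= IZR k) by (apply IZR_le; lia). lra.
Qed.

Lemma torus_closure_coord_bounds d A z lo hi : (1 <= d)%nat ->
  (forall u, A u -> 0 <= u d < 1 /\ lo <= u d <= hi) -> torus_closure d A z ->
  0 < z d < 1 -> lo <= z d <= hi.
Proof.
  intros Hd HA Hz Hzd. assert (HA' : forall u, A u -> 0 <= u d < 1) by (apply HA).
  split; apply Rnot_lt_le; intros Hlt.
  - destruct (torus_closure_coord_approx d A z (Rmin (z d) (Rmin (1 - z d) (lo - z d))) Hd HA' Hz)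
      as [u [Au Hu]]; [repeat apply Rmin_glb_lt; lra|apply Rmin_l|
                       eapply Rle_trans; [apply Rmin_r|apply Rmin_l]|].
    pose proof (Rmin_r (z d) (Rmin (1 - z d) (lo - z d))). pose proof (Rmin_r (1 - z d) (lo - z d)).
    apply Rabs_def2 in Hu. destruct (HA u Au). lra.
  - destruct (torus_closure_coord_approx d A z (Rmin (z d) (Rmin (1 - z d) (z d - hi))) Hd HA' Hz)
      as [u [Au Hu]]; [repeat apply Rmin_glb_lt; lra|apply Rmin_l|
                       eapply Rle_trans; [apply Rmin_r|apply Rmin_l]|].
    pose proof (Rmin_r (z d) (Rmin (1 - z d) (z d - hi))). pose proof (Rmin_r (1 - z d) (z d - hi)).
    apply Rabs_def2 in Hu. destruct (HA u Au). lra.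
Qed.

Lemma torus_closure_U_coord d b t z : (1 <= d)%nat -> (5 <= b)%nat -> (1 <= t)%nat ->
  torus_closure d (U d b t) z -> 0 < z d < 1 ->
  (t = 1%nat -> z d <= logb b 2) /\ ((2 <= t)%nat -> logb b 2 <= z d).
Proof.
  intros Hd Hb Ht Hz Hzd. split; intros Ht'.
  - subst t. refine (proj2 (torus_closure_coord_bounds d _ z 0 (logb b 2) Hd _ Hz Hzd)).
    intros u [Hu Hud]. pose proof (Hu d ltac:(lia)).
    replace (INR 1 + 1) with 2 in Hud by (simpl; ring). lra.
  - refine (proj1 (torus_closure_coord_bounds d _ z (logb b 2) 1 Hd _ Hz Hzd)).
    intros u [Hu Hud]. pose proof (Hu d ltac:(lia)). pose proof (logb_2_le b t Hb Ht'). lra.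
Qed.

Definition separated (L u w : R) : Prop :=
  (0 < u < L /\ L < w < 1) \/ (0 < w < L /\ L < u < 1).

Lemma iter_fmap_range zeta x d n : (1 <= d)%nat -> in_torus d x ->
  0 <= Nat.iter n (fmap zeta) x d < 1.
Proof.
  intros Hd Hx. destruct n; [apply Hx; lia|].
  change (0 <= frac_part (zeta + sum1 d (fun j => binom d j * Nat.iter n (fmap zeta) x j)) < 1).
  pose proof (base_fp (zeta + sum1 d (fun j => binom d j * Nat.iter n (fmap zeta) x j))). lra.
Qed.

Lemma not_sim_of_separated d b zeta x y n u w : (1 <= d)%nat -> (5 <= b)%nat ->
  in_torus d x -> in_torus d y ->
  is_int (Nat.iter n (fmap zeta) x d - u) -> is_int (Nat.iter n (fmap zeta) y d - w) ->
  separated (logb b 2) u w -> ~ sim d b zeta x y.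
Proof.
  intros Hd Hb Hx Hy Hu Hw Hsep Hsim. pose proof (logb_2_range b Hb).
  assert (Huw : 0 < u < 1 /\ 0 < w < 1) by (unfold separated in Hsep; lra).
  assert (Ex : Nat.iter n (fmap zeta) x d = u)
    by (apply frac_eq_of_int_sub; [apply iter_fmap_range|lra|]; auto).
  assert (Ey : Nat.iter n (fmap zeta) y d = w)
    by (apply frac_eq_of_int_sub; [apply iter_fmap_range|lra|]; auto).
  rewrite <- Ex, <- Ey in Hsep. clear Hu Hw Huw Ex Ey.
  destruct (Hsim (S n) ltac:(lia) n ltac:(lia)) as [t [Ht [Cx Cy]]].
  destruct (Nat.eq_dec t 1) as [Ht1|Ht1]; [|assert (Ht2 : (2 <= t)%nat) by lia];
    destruct (torus_closure_U_coord d b t _ Hd Hb ltac:(lia) Cx) as [Hx1 Hx2];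
    destruct (torus_closure_U_coord d b t _ Hd Hb ltac:(lia) Cy) as [Hy1 Hy2];
    unfold separated in Hsep; try lra.
  - destruct Hsep as [[? ?]|[? ?]]; [specialize (Hy1 Ht1)|specialize (Hx1 Ht1)]; lra.
  - destruct Hsep as [[? ?]|[? ?]]; [specialize (Hx2 Ht2)|specialize (Hy2 Ht2)]; lra.
Qed.

(** * Separating the two orbits *)

Lemma hits_open_interval (Q : nat -> R) lo hi : lo < hi <= lo + 1 ->
  (forall j, (j <> 0)%Z -> forall a phi,
     mean_to (fun m => a * cos (2 * PI * (IZR j * Q m) + phi)) 0) ->
  exists m u, is_int (Q m - u) /\ lo < u < hi.
Proof.
  intros Hlh HW.
  destruct (hits_interval Q ((lo + hi) / 2) ((hi - lo) / 2)) as [m [k Hk]]; [lra|auto|].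
  exists m, (Q m - IZR k). split; [exists k; ring|]. apply Rabs_def2 in Hk. lra.
Qed.

Section SeparatingTime.

Variables (L zeta : R) (d : nat) (G P : nat -> R).
Hypotheses (L_range : 0 < L < 1/2) (d_pos : (1 <= d)%nat) (zeta_irrational : irrational zeta)
  (G_lead : has_lead d zeta G).

Definition separating_time : Prop :=
  exists n u w, is_int (G n - u) /\ is_int (G n + P n - w) /\ separated L u w.

Lemma mean_to_cos_G_progression s q j a phi : (1 <= q)%nat -> (j <> 0)%Z ->
  mean_to (fun m => a * cos (2 * PI * (IZR j * G (s + q * m)%nat) + phi)) 0.
Proof.
  intros Hq Hj. apply (mean_to_cos_poly d (IZR j * (zeta * INR q ^ d))); auto.
  - apply irrational_mul_IZR; [apply irrational_mul_pow|]; auto.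
  - apply has_lead_scal, has_lead_affine, G_lead.
Qed.

(* If [P] is periodic modulo one, it is constant modulo one, equal to some
   [delta <> 0], along a progression on which [G] is equidistributed. *)
Lemma separating_time_periodic q k : (1 <= q)%nat ->
  (forall n, is_int (P (n + q)%nat - P n)) -> ~ is_int (P k) -> separating_time.
Proof.
  intros Hq HP Hk.
  set (delta := frac_part (P k)). pose proof (base_fp (P k)) as [Hd0 Hd1]. fold delta in Hd0, Hd1.
  assert (Hdelta : delta <> 0) by (intros E; apply Hk, fp_nat, E).
  assert (HPm : forall m, is_int (P (k + q * m)%nat - delta)).
  { intros m. replace (P (k + q * m)%nat - delta)
      with ((P (k + m * q)%nat - P k) + IZR (Int_part (P k)))
      by (rewrite (Nat.mul_comm m q); pose proof (Rplus_Int_part_frac_part (P k)) as E;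
          fold delta in E; lra).
    apply is_int_add; [apply is_int_sub_periodic; auto|apply is_int_IZR]. }
  assert (HW := fun j Hj a phi => mean_to_cos_G_progression k q j a phi Hq Hj).
  destruct (Rlt_dec (L + delta) 1) as [Hsmall|Hbig].
  - destruct (hits_open_interval (fun m => G (k + q * m)%nat) (Rmax 0 (L - delta)) L)
      as [m [u [Hu Hrange]]]; [split; [apply Rmax_lub_lt|apply Rmax_case]; lra|auto|].
    exists (k + q * m)%nat, u, (u + delta). split; [auto|split].
    + replace (G (k + q * m)%nat + P (k + q * m)%nat - (u + delta))
        with ((G (k + q * m)%nat - u) + (P (k + q * m)%nat - delta)) by ring.
      apply is_int_add; auto.
    + left. pose proof (Rmax_l 0 (L - delta)). pose proof (Rmax_r 0 (L - delta)). lra.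
  - destruct (hits_open_interval (fun m => G (k + q * m)%nat) L (Rmin 1 (1 - delta + L)))
      as [m [u [Hu Hrange]]]; [split; [apply Rmin_glb_lt|apply Rmin_case]; lra|auto|].
    exists (k + q * m)%nat, u, (u + delta - 1). split; [auto|split].
    + replace (G (k + q * m)%nat + P (k + q * m)%nat - (u + delta - 1))
        with ((G (k + q * m)%nat - u) + (P (k + q * m)%nat - delta) + 1) by ring.
      apply is_int_add; [apply is_int_add; auto|apply (is_int_IZR 1)].
    + right. pose proof (Rmin_l 1 (1 - delta + L)). pose proof (Rmin_r 1 (1 - delta + L)). lra.
Qed.

(* Otherwise [(G, P)] is equidistributed in the 2-torus along a progression, and
   we pick [G] near [L/2] and [P] near [1/2]. *)
Lemma separating_time_irrational q e c T : (1 <= q)%nat -> (1 <= e < d)%nat -> irrational c ->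
  has_lead e c T -> (forall m, is_int (P (q * m)%nat - T m)) -> separating_time.
Proof.
  intros Hq He Hc HT HPT.
  destruct (hits_box (fun m => G (0 + q * m)%nat) T (L / 2) (1 / 2) (L / 4))
    as [m [[k1 H1] [k2 H2]]]; [lra| |].
  - intros j l Hjl a phi. destruct (Z.eq_dec j 0) as [->|Hj].
    + apply (mean_to_ext (fun m => a * cos (2 * PI * (IZR l * T m) + phi)));
        [intros; simpl; do 3 f_equal; ring|].
      apply (mean_to_cos_poly e (IZR l * c)); [lia|apply irrational_mul_IZR; auto; lia|].
      apply has_lead_scal; auto.
    + apply (mean_to_cos_poly d (IZR j * (zeta * INR q ^ d))); [lia| |].
      { apply irrational_mul_IZR; [apply irrational_mul_pow|]; auto. }
      apply has_lead_add; [apply has_lead_scal, has_lead_affine, G_lead|].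
      apply poly_seq_scal, (poly_seq_le e); [lia|]. apply (has_lead_poly_seq e c); auto.
  - apply Rabs_def2 in H1. apply Rabs_def2 in H2.
    exists (q * m)%nat, (G (q * m)%nat - IZR k1), (G (q * m)%nat - IZR k1 + (T m - IZR k2)).
    split; [exists k1; ring|split].
    + replace (G (q * m)%nat + P (q * m)%nat - (G (q * m)%nat - IZR k1 + (T m - IZR k2)))
        with ((P (q * m)%nat - T m) + IZR k1 + IZR k2) by ring.
      apply is_int_add; [apply is_int_add; [auto|apply is_int_IZR]|apply is_int_IZR].
    + left. simpl in H1. lra.
Qed.

Lemma separating_time_exists k : poly_seq (pred d) P -> ~ is_int (P k) -> separating_time.
Proof.
  intros HP Hk.
  destruct (poly_seq_mod1_dichotomy (pred d) P HP)
    as [[q [Hq Hper]]|[q [e [c [T [Hq [He [Hc [HT HPT]]]]]]]]].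
  - apply (separating_time_periodic q k); auto.
  - apply (separating_time_irrational q e c T); auto. lia.
Qed.

End SeparatingTime.

Theorem mainTheorem5 (d b : nat) (a : R) (x y : nat -> R) :
  (1 <= d)%nat -> (5 <= b)%nat -> 0 < a ->
  ~ is_rational (logb b a) ->
  in_torus d x -> in_torus d y ->
  ~ stable d (fun i => y i - x i) ->
  ~ sim d b (logb b a) x y.
Proof.
  (* [0 < a] only makes [logb b a] meaningful; irrationality is what is used. *)
  intros Hd Hb _ Hirr Hx Hy Hns.
  set (zeta := logb b a) in *. set (r := fun i => y i - x i) in *.
  set (G := fun n => Nat.iter n (lift_map zeta) x d).
  set (P := fun n => Nat.iter n (lift_map 0) r d).
  destruct (not_stable_not_int d r Hns) as [k Hk].
  destruct (separating_time_exists (logb b 2) zeta d G P (logb_2_range b Hb) Hd Hirr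
              (lift_map_iter_has_lead zeta x d Hd) k) as [n [u [w [Hu [Hw Hsep]]]]]; auto.
  { apply has_lead_0_poly_seq, lift_map_iter_has_lead; auto. }
  apply (not_sim_of_separated d b zeta x y n u w); auto.
  - replace (Nat.iter n (fmap zeta) x d - u)
      with ((Nat.iter n (fmap zeta) x d - G n) + (G n - u)) by ring.
    apply is_int_add; [apply iter_fmap_sub_lift_map_int|auto].
  - replace (Nat.iter n (fmap zeta) y d - w)
      with ((Nat.iter n (fmap zeta) y d - Nat.iter n (fmap zeta) x d - P n)
            + (Nat.iter n (fmap zeta) x d - G n) + (G n + P n - w)) by ring.
    apply is_int_add; [apply is_int_add|auto];
      [apply iter_fmap_sub_iter_fmap_int|apply iter_fmap_sub_lift_map_int].
Qed.
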